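(* Let $G$ be an $n$-vertex connected graph with chromatic number $\chi \geq 2$, and suppose that $\chi$ divides $n$. Then ${\rm ABC}(G) \leq {\rm ABC}(T_{n,\chi})$, with equality if and only if $G \cong T_{n,\chi}$.
   Context: All graphs are simple and undirected. For a graph $G$ and a vertex $v$, $d(v)$ denotes the degree of $v$. The atom-bond connectivity (ABC) index is ${\rm ABC}(G)=\sum_{uv\in E(G)} \sqrt{\frac{d(u)+d(v)-2}{d(u)d(v)}}$. $T_{n,l}$ denotes the complete $l$-partite graph on $n$ vertices whose part sizes $t_1,\dots,t_l$ satisfy $|t_i - t_j| \leq 1$ for all $i,j$. *)

From mathcomp Require Import all_boot all_order all_algebra.
From mathcomp Require Import reals.
Set Implicit Arguments. Unset Strict Implicit. Unset Printing Implicit Defensive.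
Import Order.TTheory GRing.Theory Num.Theory.

Definition simple_graph (V : finType) (e : rel V) : Prop :=
  symmetric e /\ irreflexive e.

Definition connected_graph (V : finType) (e : rel V) : Prop :=
  forall x y : V, connect e x y.

Definition deg (V : finType) (e : rel V) (v : V) : nat := #|[set w | e v w]|.

Definition colorable (V : finType) (e : rel V) (k : nat) : Prop :=
  exists f : V -> 'I_k, forall x y, e x y -> f x != f y.

Definition chromatic_number (V : finType) (e : rel V) (chi : nat) : Prop :=
  colorable e chi /\ forall k, colorable e k -> chi <= k.

Local Open Scope ring_scope.

(* ABC index: sum over unordered edges uv; each edge is counted twice in the
   double sum over ordered adjacent pairs, hence the factor 1/2. *)
Definition ABC (R : realType) (V : finType) (e : rel V) : R :=
  2^-1 * \sum_(x : V) \sum_(y : V | e x y)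
    Num.sqrt (((deg e x)%:R + (deg e y)%:R - 2) / ((deg e x)%:R * (deg e y)%:R)).

Local Close Scope ring_scope.

(* Turan graph T_{n,l}: vertices 0..n-1, vertex i in part (i mod l); complete
   l-partite, part sizes differ by at most one. *)
Definition turan (n l : nat) : rel 'I_n := fun i j => (i %% l != j %% l)%N.
Arguments turan n l : clear implicits.

Definition isomorphic (V W : finType) (e : rel V) (f : rel W) : Prop :=
  exists g : V -> W, bijective g /\ forall x y, f (g x) (g y) = e x y.

From mathcomp Require Import all_boot all_order all_algebra.
From mathcomp Require Import reals.
From mathcomp Require Import lra ring zify.
Import Order.TTheory GRing.Theory Num.Theory.
Set Implicit Arguments. Unset Strict Implicit. Unset Printing Implicit Defensive.

(* By Cauchy-Schwarz over the ordered pairs of adjacent vertices,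
   (2 ABC)^2 <= 2m (2n - 2 S) with S = sum_{x ~ y} 1/(d_x d_y) >= n/D for the
   maximum degree D, so D (2 ABC)^2 <= 2n 2m (D - 1), strictly unless the graph is
   regular.  For a proper chi-colouring with class sizes a_i, 2m + sum a_i^2 <= n^2
   and a vertex of degree D lies in a class of size at most n - D; together with
   Cauchy-Schwarz on the a_i, a case split on D <= n - n/chi gives
   2m (D - 1) <= n D (n - n/chi - 1), that is (2 ABC)^2 <= (2 ABC(T_{n,chi}))^2.
   In the equality case the graph is (n - n/chi)-regular, which forces every
   colour class to have n/chi vertices and every vertex to be adjacent to all
   vertices outside its class: the graph is T_{n,chi}. *)


Definition regular (V : finType) (e : rel V) (D : nat) : Prop :=
  forall x, deg e x = D.

Lemma card_residue_class (l k r : nat) : r < l ->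
  #|[set j : 'I_(l * k) | j %% l == r]| = k.
Proof.
move=> r_lt_l.
have lift_lt (t : 'I_k) : r + l * t < l * k.
  have : l * t.+1 <= l * k by rewrite leq_mul2l ltn_ord orbT.
  rewrite mulnS; lia.
pose lift (t : 'I_k) : 'I_(l * k) := Ordinal (lift_lt t).
have lift_inj : injective lift.
  move=> t t' /(congr1 val) /= /eqP; rewrite eqn_add2l eqn_mul2l.
  by case/orP => [/eqP l0|/eqP /val_inj //]; rewrite l0 in r_lt_l.
suff -> : [set j : 'I_(l * k) | j %% l == r] = lift @: 'I_k.
  by rewrite card_imset // card_ord.
apply/setP => j; rewrite inE; apply/eqP/imsetP => [j_r|[t _ ->] /=].
  have jk : j %/ l < k by rewrite ltn_divLR ?(leq_ltn_trans _ r_lt_l) // -[k * l]mulnC.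
  exists (Ordinal jk) => //; apply: val_inj => /=.
  by rewrite {1}(divn_eq j l) j_r addnC mulnC.
by rewrite addnC mulnC modnMDl modn_small.
Qed.

Lemma deg_turan (l k : nat) (i : 'I_(l * k)) : deg (turan (l * k) l) i = l * k - k.
Proof.
have l_gt0 : 0 < l by case: l i => [[]|].
have := cardsC [set j : 'I_(l * k) | j %% l == i %% l].
rewrite card_residue_class ?ltn_pmod // card_ord /deg.
suff -> : ~: [set j : 'I_(l * k) | j %% l == i %% l] = [set j | turan (l * k) l i j].
  lia.
by apply/setP => j; rewrite !inE /turan eq_sym.
Qed.

Lemma deg_isomorphic (V W : finType) (e : rel V) (f : rel W) (g : V -> W) :
  bijective g -> (forall x y, f (g x) (g y) = e x y) -> forall x, deg f (g x) = deg e x.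
Proof.
move=> g_bij g_hom x; have [g' gK g'K] := g_bij.
rewrite /deg -(card_imset _ (bij_inj g_bij)); apply: eq_card => w.
rewrite inE; apply/idP/imsetP => [f_gx_w|[y xy ->]].
  by exists (g' w); rewrite ?g'K // inE -g_hom g'K.
by rewrite g_hom; move: xy; rewrite inE.
Qed.

Lemma deg_gt0_of_connected (V : finType) (e : rel V) (x y z : V) :
  connected_graph e -> e x y -> 0 < deg e z.
Proof.
move=> conn xy; apply/card_gt0P.
have /connectP[[|w p] /= path_zx x_last] := conn z x.
  by exists y; rewrite inE -x_last.
by exists w; case/andP: path_zx; rewrite inE.
Qed.

Lemma exists_edge_of_chromatic_number (V : finType) (e : rel V) (chi : nat) :
  chromatic_number e chi -> 1 < chi -> exists x y, e x y.
Proof.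
move=> [_ chi_min] chi_gt1.
case: (pickP (fun p : V * V => e p.1 p.2)) => [[x y] xy|no_edge]; first by exists x, y.
suff /chi_min : colorable e 1 by lia.
by exists (fun _ => ord0) => x y xy; move: (no_edge (x, y)); rewrite /= xy.
Qed.

Local Open Scope ring_scope.

Lemma sqr_sum_le (R : realFieldType) (I : finType) (P : pred I) (F : I -> R) :
  (\sum_(i | P i) F i) ^+ 2 <= (\sum_(i | P i) 1) * \sum_(i | P i) F i ^+ 2.
Proof.
set N := \sum_(i | P i) (1 : R); set A := \sum_(i | P i) F i.
set B := \sum_(i | P i) F i ^+ 2.
have sum_const (c : R) : \sum_(i | P i) c = N * c.
  by rewrite /N mulr_suml; apply: eq_bigr => *; rewrite mul1r.
have : 0 <= \sum_(i | P i) \sum_(j | P j) (F i - F j) ^+ 2.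
  by do 2![apply: sumr_ge0 => ? _]; exact: sqr_ge0.
suff -> : \sum_(i | P i) \sum_(j | P j) (F i - F j) ^+ 2 = 2 * (N * B - A ^+ 2) by lra.
transitivity (\sum_(i | P i) (N * F i ^+ 2 + B - 2 * A * F i)).
  apply: eq_bigr => i _; under eq_bigr => j _ do rewrite sqrrB.
  rewrite big_split /= sumrB big_split /= sum_const -mulr_sumr -/A -/B; ring.
rewrite sumrB big_split /= sum_const -!mulr_sumr -/A -/B; ring.
Qed.

Lemma ltr_sum_strict_at (R : numDomainType) (I : finType) (P : pred I) (F G : I -> R) (j : I) :
  (forall i, P i -> F i <= G i) -> P j -> F j < G j ->
  \sum_(i | P i) F i < \sum_(i | P i) G i.
Proof.
move=> FG Pj FGj; rewrite (bigD1 j) // [ltRHS](bigD1 j) //=.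
by apply: ltr_leD => //; apply: ler_sum => i /andP[Pi _]; exact: FG.
Qed.

Section ABCBound.
Variables (R : realType) (V : finType) (e : rel V).
Hypotheses (e_sym : symmetric e) (deg_gt0 : forall x, (0 < deg e x)%N).
Local Notation d x := ((deg e x)%:R : R).

Lemma sum1_adj x : \sum_(y | e x y) 1 = d x.
Proof. by rewrite /deg -sum1dep_card natr_sum. Qed.

Lemma sum_adj_const x (c : R) : \sum_(y | e x y) c = d x * c.
Proof. by rewrite -sum1_adj mulr_suml; apply: eq_bigr => *; rewrite mul1r. Qed.

Lemma exchange_adj_sum (G : V -> V -> R) :
  \sum_x \sum_(y | e x y) G x y = \sum_x \sum_(y | e x y) G y x.
Proof.
under eq_bigr => x _ do rewrite big_mkcond.
rewrite exchange_big /=; apply: eq_bigr => y _; rewrite [RHS]big_mkcond /=.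
by apply: eq_bigr => x _; rewrite e_sym.
Qed.

Let d_gt0 x : 0 < d x. Proof. by rewrite ltr0n. Qed.

Let card_sum_inv_deg : #|V|%:R = \sum_x \sum_(y | e x y) (d x)^-1.
Proof.
rewrite -sum1_card natr_sum; apply: eq_bigr => x _.
by rewrite sum_adj_const divff ?gt_eqF.
Qed.

(* Twice the general Randic index R_{-1}: each edge is counted in both directions. *)
Definition randic_inv : R := \sum_x \sum_(y | e x y) (d x * d y)^-1.

Lemma sqr_ABC_le :
  (2 * ABC R e) ^+ 2 <= (\sum_x d x) * (2 * #|V|%:R - 2 * randic_inv).
Proof.
pose w x y := (d x + d y - 2) / (d x * d y).
have w_ge0 x y : 0 <= w x y.
  have := deg_gt0 x; have := deg_gt0 y => dx dy.
  by rewrite divr_ge0 ?mulr_ge0 // subr_ge0 -natrD ler_nat; lia.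
have w_split x y : w x y = (d x)^-1 + (d y)^-1 - 2 * (d x * d y)^-1.
  by rewrite /w; field; rewrite !pnatr_eq0 -!lt0n !deg_gt0.
have -> : 2 * ABC R e = \sum_x \sum_(y | e x y) Num.sqrt (w x y).
  by rewrite /ABC mulrA divff ?mul1r // pnatr_eq0.
have -> : 2 * #|V|%:R - 2 * randic_inv = \sum_x \sum_(y | e x y) Num.sqrt (w x y) ^+ 2.
  under eq_bigr => x _ do under eq_bigr => y _ do rewrite sqr_sqrtr // w_split.
  under eq_bigr => x _ do rewrite sumrB big_split /= -mulr_sumr.
  rewrite sumrB big_split /= -mulr_sumr -(exchange_adj_sum (fun x y => (d x)^-1)).
  by rewrite -card_sum_inv_deg -/randic_inv; ring.
have -> : \sum_x d x = \sum_x \sum_(y | e x y) 1 by apply: eq_bigr => x _; rewrite sum1_adj.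
rewrite !pair_big_dep /=; exact: sqr_sum_le.
Qed.

Section MaxDegree.
Variable D : nat.

Let inv_deg_le x y : (deg e y <= D)%N -> (d x)^-1 <= D%:R * (d x * d y)^-1.
Proof.
by move=> le_yD; rewrite invfM mulrCA ler_pMr ?invr_gt0 // ler_pdivlMr // mul1r ler_nat.
Qed.

Let inv_deg_lt x y : (deg e y < D)%N -> (d x)^-1 < D%:R * (d x * d y)^-1.
Proof.
by move=> lt_yD; rewrite invfM mulrCA ltr_pMr ?invr_gt0 // ltr_pdivlMr // mul1r ltr_nat.
Qed.

Hypothesis deg_le : forall x, (deg e x <= D)%N.

Lemma card_le_randic_inv : #|V|%:R <= D%:R * randic_inv.
Proof.
rewrite card_sum_inv_deg mulr_sumr; apply: ler_sum => x _.
by rewrite mulr_sumr; apply: ler_sum => y _; exact: inv_deg_le.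
Qed.

Lemma card_lt_randic_inv : (exists y, deg e y < D)%N -> #|V|%:R < D%:R * randic_inv.
Proof.
move=> [y lt_yD]; have /card_gt0P[x] := deg_gt0 y; rewrite inE e_sym => xy.
rewrite card_sum_inv_deg mulr_sumr; apply: (ltr_sum_strict_at (j := x)) => // [z _|].
  by rewrite mulr_sumr; apply: ler_sum => t _; exact: inv_deg_le.
rewrite mulr_sumr; apply: (ltr_sum_strict_at (j := y)) => // [t _|]; last exact: inv_deg_lt.
exact: inv_deg_le.
Qed.

Let deg_sum_ge0 : 0 <= \sum_x d x.
Proof. by apply: sumr_ge0 => x _; exact: ltW. Qed.

Lemma max_deg_mul_sqr_ABC_le :
  D%:R * (2 * ABC R e) ^+ 2 <= 2 * #|V|%:R * (\sum_x d x) * (D%:R - 1).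
Proof.
have := sqr_ABC_le; have := card_le_randic_inv; have := ler0n R D.
move: deg_sum_ge0; nra.
Qed.

Lemma max_deg_mul_sqr_ABC_lt : (exists y, deg e y < D)%N ->
  D%:R * (2 * ABC R e) ^+ 2 < 2 * #|V|%:R * (\sum_x d x) * (D%:R - 1).
Proof.
move=> nonreg; have [y _] := nonreg.
have deg_sum_gt0 : 0 < \sum_x d x.
  rewrite (bigD1 y) //=; apply: ltr_pwDl => //.
  by apply: sumr_ge0 => x _; exact: ltW.
have := sqr_ABC_le; have := card_lt_randic_inv nonreg; have := ler0n R D.
move: deg_sum_gt0; nra.
Qed.
End MaxDegree.
End ABCBound.

Lemma sqr_ABC_regular (R : realType) (V : finType) (e : rel V) (D : nat) :
  (0 < D)%N -> regular e D -> (2 * ABC R e) ^+ 2 = #|V|%:R ^+ 2 * (2 * D%:R - 2).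
Proof.
move=> D_gt0 e_reg; have D_ge1 : 1 <= D%:R :> R by rewrite ler1n.
rewrite /ABC mulrA divff ?mul1r ?pnatr_eq0 //.
under eq_bigr => x _ do under eq_bigr => y _ do rewrite !e_reg.
under eq_bigr => x _ do rewrite sum_adj_const e_reg.
rewrite sumr_const -[_ *+ #|_|]mulr_natr !exprMn sqr_sqrtr; last first.
  by rewrite divr_ge0 ?mulr_ge0 //; lra.
by field; rewrite pnatr_eq0 -lt0n.
Qed.

Lemma ABC_ge0 (R : realType) (V : finType) (e : rel V) : 0 <= ABC R e.
Proof.
rewrite mulr_ge0 ?invr_ge0 ?ler0n //.
by do 2![apply: sumr_ge0 => ? _]; exact: sqrtr_ge0.
Qed.

Lemma ABC_le_of_sqr (R : realType) (V W : finType) (e : rel V) (f : rel W) :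
  (2 * ABC R e) ^+ 2 <= (2 * ABC R f) ^+ 2 -> ABC R e <= ABC R f.
Proof. by have := ABC_ge0 R e; have := ABC_ge0 R f; nra. Qed.

Lemma ABC_eq_of_sqr (R : realType) (V W : finType) (e : rel V) (f : rel W) :
  (2 * ABC R e) ^+ 2 = (2 * ABC R f) ^+ 2 -> ABC R e = ABC R f.
Proof. by move=> sqr_eq; apply/le_anti; rewrite !ABC_le_of_sqr ?sqr_eq. Qed.

Section Colouring.
Variables (V : finType) (l : nat) (c : V -> 'I_l).

Definition colour_class (i : 'I_l) : {set V} := [set x | c x == i].

Lemma sum_colour_class (R : nmodType) (F : 'I_l -> R) :
  \sum_x F (c x) = \sum_i F i *+ #|colour_class i|.
Proof.
rewrite (partition_big c xpredT) //=; apply: eq_bigr => i _.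
rewrite (eq_bigr (fun _ => F i)); last by move=> x /eqP ->.
by rewrite sumr_const /colour_class cardsE.
Qed.

Lemma sum_card_colour_class : (\sum_i #|colour_class i|)%N = #|V|.
Proof.
by rewrite -[RHS]sum1_card (sum_colour_class (fun=> 1%N)); apply: eq_bigr => i _; rewrite natn.
Qed.

Lemma sqr_card_le_sum_sqr_colour_class (R : realType) :
  #|V|%:R ^+ 2 <= l%:R * \sum_i #|colour_class i|%:R ^+ 2 :> R.
Proof.
have := sqr_sum_le xpredT (fun i : 'I_l => #|colour_class i|%:R : R).
by rewrite -natr_sum sum_card_colour_class sumr_const card_ord.
Qed.

Lemma sqr_card_sub_colour_class_le (R : realType) (i0 : 'I_l) :
  (#|V|%:R - #|colour_class i0|%:R) ^+ 2 <=
    (l%:R - 1) * (\sum_i #|colour_class i|%:R ^+ 2 - #|colour_class i0|%:R ^+ 2) :> R.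
Proof.
have := sqr_sum_le (fun i => i != i0) (fun i => #|colour_class i|%:R : R).
have -> : \sum_(i | i != i0) #|colour_class i|%:R = #|V|%:R - #|colour_class i0|%:R :> R.
  by rewrite -sum_card_colour_class natr_sum [X in _ = X - _](bigD1 i0) //=; ring.
have -> : \sum_(i | i != i0) 1 = l%:R - 1 :> R.
  have : \sum_(i : 'I_l) 1 = l%:R :> R by rewrite sumr_const card_ord.
  by rewrite (bigD1 i0) //= => <-; ring.
by rewrite [X in _ <= _ * (X - _)](bigD1 i0) //= addrC addrK.
Qed.

Variable e : rel V.
Hypothesis c_proper : forall x y, e x y -> c x != c y.

Lemma adj_sub_colour_classC x : [set y | e x y] \subset ~: colour_class (c x).
Proof. by apply/subsetP => y; rewrite !inE eq_sym => /c_proper. Qed.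

Lemma deg_add_card_colour_class_le x : (deg e x + #|colour_class (c x)| <= #|V|)%N.
Proof.
have := subset_leq_card (adj_sub_colour_classC x).
by have := cardsC (colour_class (c x)); rewrite /deg; lia.
Qed.

Lemma deg_sum_add_sum_sqr_colour_class_le (R : realType) :
  \sum_x (deg e x)%:R + \sum_i #|colour_class i|%:R ^+ 2 <= #|V|%:R ^+ 2 :> R.
Proof.
have -> : \sum_i #|colour_class i|%:R ^+ 2 = \sum_x #|colour_class (c x)|%:R :> R.
  rewrite (sum_colour_class (fun i => #|colour_class i|%:R)).
  by apply: eq_bigr => i _; rewrite expr2 mulr_natr.
have -> : #|V|%:R ^+ 2 = \sum_(x : V) #|V|%:R :> R by rewrite sumr_const expr2 mulr_natr.
rewrite -big_split /=; apply: ler_sum => x _.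
by rewrite -natrD ler_nat deg_add_card_colour_class_le.
Qed.
End Colouring.

Section DegreeSumArithmetic.
Variable R : realFieldType.

(* Read [c k] as the number of vertices of a [c]-colourable graph, [N] as its
   degree sum, [Q] as the sum of the squared colour class sizes, [D] as the degree
   of a vertex and [a] as the size of its colour class. *)

Lemma deg_sum_arith_low (c k D N Q : R) :
  2 <= c -> 1 <= D <= c * k - k -> N + Q <= (c * k) ^+ 2 -> (c * k) ^+ 2 <= c * Q ->
  N * (D - 1) <= c * k * D * (c * k - k - 1).
Proof.
move=> c_ge2 /andP[D_ge1 D_le] NQ Q_ge.
have N_le : N <= c * k * (c * k - k).
  rewrite -(ler_pM2l (_ : 0 < c)); last lra.
  nra.
have k_gt0 : 0 < k by nra.
have : 0 <= c * k * (c * k - k - D) by rewrite mulr_ge0 ?mulr_ge0 //; lra.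
have : N * (D - 1) <= c * k * (c * k - k) * (D - 1) by rewrite ler_wpM2r // subr_ge0.
nra.
Qed.

Lemma deg_sum_arith_high (c k a D N Q : R) :
  2 <= c -> 0 <= a -> a + D <= c * k -> c * k - k + 1 <= D ->
  N + Q <= (c * k) ^+ 2 -> (c * k - a) ^+ 2 <= (c - 1) * (Q - a ^+ 2) ->
  N * (D - 1) <= c * k * D * (c * k - k - 1).
Proof.
move=> c_ge2 a_ge0 aD D_ge NQ Q_ge.
have k_ge1 : 1 <= k by lra.
have D_ge1 : 1 <= D by nra.
have Q_ge' : (c - 1) * (c * k - D) ^+ 2 + D ^+ 2 <= (c - 1) * Q.
  have : 0 <= ((c * k - D) - a) * (2 * (c * k) - c * (a + (c * k - D))).
    apply: mulr_ge0; first lra.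
    have : 0 <= c * (2 * k - (a + (c * k - D))) by apply: mulr_ge0; lra.
    lra.
  nra.
have N_le : (c - 1) * N <= c * D * (2 * (c - 1) * k - D).
  have : (c - 1) * N <= (c - 1) * ((c * k) ^+ 2 - Q) by rewrite ler_pM2l; lra.
  nra.
have : c * D * ((2 * (c - 1) * k - D) * (D - 1)) <=
        c * D * ((c - 1) * k * ((c - 1) * k - 1)).
  apply: ler_wpM2l; first by apply: mulr_ge0; lra.
  have : 0 <= (D - (c - 1) * k) * (D - (c - 1) * k - 1) by apply: mulr_ge0; lra.
  nra.
have : (c - 1) * N * (D - 1) <= c * D * (2 * (c - 1) * k - D) * (D - 1).
  by rewrite ler_wpM2r //; lra.
rewrite -(ler_pM2l (_ : 0 < c - 1)); last lra.
nra.
Qed.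
End DegreeSumArithmetic.

Lemma deg_sum_le_turan (R : realType) (V : finType) (e : rel V) (chi k : nat)
    (c : V -> 'I_chi) (u : V) :
  (forall x y, e x y -> c x != c y) -> #|V| = (chi * k)%N -> (1 < chi)%N ->
  (0 < deg e u)%N ->
  (\sum_x (deg e x)%:R) * ((deg e u)%:R - 1) <=
    chi%:R * k%:R * (deg e u)%:R * (chi%:R * k%:R - k%:R - 1) :> R.
Proof.
move=> c_proper card_V chi_gt1 deg_u_gt0.
have deg_class_le := deg_add_card_colour_class_le c_proper u.
have := deg_sum_add_sum_sqr_colour_class_le c_proper R.
have := sqr_card_le_sum_sqr_colour_class c R.
have := sqr_card_sub_colour_class_le c R (c u).
rewrite card_V !natrM => class_sub_le sqr_le deg_sum_le.
have chi_ge2 : 2 <= chi%:R :> R by rewrite ler_nat.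
have deg_u_ge1 : 1 <= (deg e u)%:R :> R by rewrite ler1n.
have k_le : (k <= chi * k)%N by rewrite leq_pmull // ltnW.
case: (leqP (deg e u) (chi * k - k)) => [low|high].
  apply: deg_sum_arith_low sqr_le => //; apply/andP; split => //.
  by rewrite -natrM -natrB // ler_nat.
apply: (deg_sum_arith_high _ _ _ _ deg_sum_le class_sub_le) => //.
- by rewrite -natrM -natrD ler_nat addnC -card_V.
- by rewrite -natrM -natrB // natr1 ler_nat.
Qed.

Section CompleteMultipartite.
Variables (V : finType) (l k : nat) (c : V -> 'I_l) (e : rel V).

Lemma isomorphic_turan_of_colour_classes :
  (forall i, #|colour_class c i| = k) -> (forall x y, e x y = (c x != c y)) ->
  isomorphic e (turan (l * k) l).
Proof.
move=> class_eq adj_eq.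
have card_V : #|V| = (l * k)%N.
  rewrite -(sum_card_colour_class c) (eq_bigr _ (fun i _ => class_eq i)).
  by rewrite sum_nat_const card_ord.
pose r x := index x (enum (colour_class c (c x))).
have r_lt x : (r x < k)%N by rewrite /r -(class_eq (c x)) cardE index_mem mem_enum inE.
have g_lt x : (c x + l * r x < l * k)%N by have := ltn_ord (c x); have := r_lt x; nia.
pose g x : 'I_(l * k) := Ordinal (g_lt x).
have g_mod x : (g x %% l)%N = c x by rewrite /= addnC mulnC modnMDl modn_small.
have g_div x : (g x %/ l)%N = r x.
  by rewrite /= addnC mulnC divnMDl ?divn_small ?addn0 // (leq_ltn_trans _ (ltn_ord (c x))).
have g_inj : injective g.
  move=> x y gxy; have cxy : c x = c y by apply: val_inj; rewrite /= -g_mod gxy g_mod.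
  have : r x = r y by rewrite -g_div gxy g_div.
  rewrite /r cxy => rxy.
  have x_in : x \in enum (colour_class c (c y)) by rewrite mem_enum inE cxy.
  have y_in : y \in enum (colour_class c (c y)) by rewrite mem_enum inE.
  by rewrite -(nth_index x x_in) rxy nth_index.
exists g; split; first by apply: inj_card_bij; rewrite // card_ord card_V.
by move=> x y; rewrite /turan !g_mod adj_eq.
Qed.

Hypotheses (c_proper : forall x y, e x y -> c x != c y) (card_V : #|V| = (l * k)%N).
Hypothesis e_reg : regular e (l * k - k).

Lemma card_colour_class_regular i : #|colour_class c i| = k.
Proof.
have class_le j : (#|colour_class c j| <= k)%N.
  case: (posnP #|colour_class c j|) => [-> // | /card_gt0P[x]].
  rewrite inE => /eqP <-; have := deg_add_card_colour_class_le c_proper x.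
  by rewrite e_reg card_V; lia.
have [_] := leqif_sum (fun j (_ : true) => leqif_eq (class_le j)).
rewrite sum_card_colour_class sum_nat_const card_ord -card_V eqxx.
by move=> /esym/forallP class_eq; apply/eqP/class_eq.
Qed.

Lemma adj_eq_colour_neq x y : e x y = (c x != c y).
Proof.
have adj_eq : [set y | e x y] = ~: colour_class c (c x).
  apply/eqP; rewrite eqEcard adj_sub_colour_classC //=.
  have := cardsC (colour_class c (c x)); have := e_reg x.
  by rewrite /deg card_colour_class_regular card_V; lia.
by move/setP/(_ y): adj_eq; rewrite !inE eq_sym.
Qed.

Lemma isomorphic_turan_of_regular : isomorphic e (turan (l * k) l).
Proof.
exact: (isomorphic_turan_of_colour_classes card_colour_class_regular adj_eq_colour_neq).
Qed.
End CompleteMultipartite.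

Section TuranBound.
Variables (R : realType) (V : finType) (e : rel V) (chi k : nat) (c : V -> 'I_chi).
Hypotheses (e_sym : symmetric e) (c_proper : forall x y, e x y -> c x != c y).
Hypotheses (card_V : #|V| = (chi * k)%N) (chi_gt1 : (1 < chi)%N) (k_gt0 : (0 < k)%N).
Hypothesis deg_gt0 : forall x, (0 < deg e x)%N.

Let turan_sqr : R := (chi * k)%:R ^+ 2 * (2 * (chi * k - k)%:R - 2).

Let max_deg_mul_turan_sqr u :
  2 * #|V|%:R * (\sum_x (deg e x)%:R) * ((deg e u)%:R - 1) <= (deg e u)%:R * turan_sqr.
Proof.
have k_le : (k <= chi * k)%N by rewrite leq_pmull // ltnW.
have n2_ge0 : 0 <= 2 * (chi%:R * k%:R) :> R by rewrite !mulr_ge0.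
move: (deg_sum_le_turan R c_proper card_V chi_gt1 (deg_gt0 u)) => /(ler_wpM2l n2_ge0).
by rewrite /turan_sqr card_V natrB // !natrM; lra.
Qed.

Let exists_max_deg : exists u, forall x, (deg e x <= deg e u)%N.
Proof.
have /card_gt0P[x0 _] : (0 < #|V|)%N by rewrite card_V muln_gt0 k_gt0 ltnW.
by have [u _ u_max] := @arg_maxnP V x0 xpredT (deg e) isT; exists u => x; exact: u_max.
Qed.

Lemma sqr_ABC_le_turan : (2 * ABC R e) ^+ 2 <= turan_sqr.
Proof.
have [u u_max] := exists_max_deg.
rewrite -(ler_pM2l (_ : 0 < (deg e u)%:R)) ?ltr0n //.
exact: le_trans (max_deg_mul_sqr_ABC_le R e_sym deg_gt0 u_max) (max_deg_mul_turan_sqr u).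
Qed.

Lemma sqr_ABC_lt_turan : (exists x y, deg e x < deg e y)%N -> (2 * ABC R e) ^+ 2 < turan_sqr.
Proof.
move=> [x [y lt_xy]]; have [u u_max] := exists_max_deg.
have nonreg : exists x, (deg e x < deg e u)%N by exists x; exact: leq_trans lt_xy (u_max y).
rewrite -(ltr_pM2l (_ : 0 < (deg e u)%:R)) ?ltr0n //.
apply: lt_le_trans (max_deg_mul_turan_sqr u).
exact: (max_deg_mul_sqr_ABC_lt R e_sym deg_gt0 u_max nonreg).
Qed.

Lemma regular_of_sqr_ABC_eq_turan : (2 * ABC R e) ^+ 2 = turan_sqr -> regular e (chi * k - k).
Proof.
move=> ABC_eq; have [u u_max] := exists_max_deg.
have e_reg : regular e (deg e u).
  move=> x; apply/eqP; rewrite eqn_leq u_max leqNgt; apply/negP => lt_xu.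
  by have := sqr_ABC_lt_turan (ex_intro _ x (ex_intro _ u lt_xu)); rewrite ABC_eq ltxx.
suff <- : deg e u = (chi * k - k)%N by [].
have n_neq0 : (chi * k)%:R ^+ 2 != 0 :> R.
  by rewrite sqrf_eq0 pnatr_eq0 -lt0n muln_gt0 k_gt0 ltnW.
have := sqr_ABC_regular R (deg_gt0 u) e_reg; rewrite ABC_eq card_V => /(mulfI n_neq0) deg_eq.
by apply/eqP; rewrite -(eqr_nat R); apply/eqP; lra.
Qed.
End TuranBound.

Theorem theorem5 (R : realType) (V : finType) (e : rel V) (n chi : nat) :
  simple_graph e -> #|V| = n -> connected_graph e ->
  chromatic_number e chi -> (2 <= chi)%N -> (chi %| n)%N ->
  ((ABC R e <= ABC R (turan n chi))%R /\
   (ABC R e = ABC R (turan n chi) <-> isomorphic e (turan n chi))).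
Proof.
move=> [e_sym _] card_V conn chi_num chi_gt1 /dvdnP[k n_eq].
rewrite {}n_eq mulnC in card_V *.
have [[c c_proper] _] := chi_num.
have [x0 [y0 x0y0]] := exists_edge_of_chromatic_number chi_num chi_gt1.
have deg_gt0 z : (0 < deg e z)%N := deg_gt0_of_connected z conn x0y0.
have : (0 < #|V|)%N by apply/card_gt0P; exists x0.
rewrite card_V muln_gt0 => /andP[_ k_gt0].
have turan_deg_gt0 : (0 < chi * k - k)%N by nia.
have sqr_turan := sqr_ABC_regular R turan_deg_gt0 (@deg_turan chi k).
rewrite card_ord in sqr_turan.
split.
  apply: ABC_le_of_sqr; rewrite sqr_turan.
  exact: (sqr_ABC_le_turan R e_sym c_proper card_V chi_gt1 k_gt0 deg_gt0).
split => [ABC_eq | [g [g_bij g_hom]]].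
  apply: (isomorphic_turan_of_regular c_proper card_V).
  apply: (regular_of_sqr_ABC_eq_turan (R := R) e_sym c_proper card_V chi_gt1 k_gt0 deg_gt0).
  by rewrite ABC_eq.
have e_reg : regular e (chi * k - k).
  by move=> x; rewrite -(deg_isomorphic g_bij g_hom) deg_turan.
by apply: ABC_eq_of_sqr; rewrite sqr_turan (sqr_ABC_regular R turan_deg_gt0 e_reg) card_V.
Qed.
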